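(* Let $\mathcal C$ be a pointed category with finite coproducts and $B\colon\mathcal C\times\mathcal C\to Ab$ a bireduced bifunctor, and let $\Delta\colon\mathcal C\to\mathcal C\times\mathcal C$ be the diagonal functor. Then $T_2(B\circ\Delta)\cong(T_{11}B)\circ\Delta$; more precisely, the natural map $B\Delta\to(T_{11}B)\Delta$ induced by $t_{11}$ factors through $t_2\colon B\Delta\to T_2(B\Delta)$, and the resulting map $T_2(B\Delta)\to(T_{11}B)\Delta$ is a natural isomorphism.
   Context: Notation. $\vee$ is the coproduct, $r_k$ are the retractions of a coproduct, and $\nabla^n\colon X^{\vee n}\to X$ is the folding map. Functors and cross-effects. - A bifunctor $B$ is bireduced if $B(X,0)=B(0,Y)=0$. - For a reduced functor $F\colon\mathcal C\to Ab$: $cr_2F(X,Y)=\ker(F(X\vee Y)\to F(X)\oplus F(Y))$ and $cr_3F(X,Y,Z)=cr_2(cr_2F(-,Z))(X,Y)$. - $T_2F(X)=\mathrm{coker}\big(cr_3F(X,X,X)\subseteq F(X^{\vee3})\xrightarrow{F(\nabla^3)}F(X)\big)$, with projection $t_2$. - $T_{11}B(X,Y)=B(X,Y)/(N_1+N_2)$, where $N_1$ is the image of $cr_2(B(-,Y))(X,X)\subseteq B(X\vee X,Y)$ under $B(\nabla^2,1)$ and $N_2$ the image of $cr_2(B(X,-))(Y,Y)$ under $B(1,\nabla^2)$; $t_{11}$ is the projection. *)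

(* abelian groups are zmodType, homomorphisms {additive _ -> _}. *)
From HB Require Import structures.
From mathcomp Require Import all_boot all_algebra.
Set Implicit Arguments. Unset Strict Implicit. Unset Printing Implicit Defensive.
Import GRing.Theory.
Local Open Scope ring_scope.

Record Cat := {
  Obj :> Type;
  Mor : Obj -> Obj -> Type;
  idm : forall X, Mor X X;
  comp : forall X Y Z, Mor Y Z -> Mor X Y -> Mor X Z;
  comp_idl : forall X Y (f : Mor X Y), comp (idm Y) f = f;
  comp_idr : forall X Y (f : Mor X Y), comp f (idm X) = f;
  comp_assoc : forall X Y Z W (h : Mor Z W) (g : Mor Y Z) (f : Mor X Y),
      comp h (comp g f) = comp (comp h g) f }.
Arguments Mor {c}. Arguments idm {c}. Arguments comp {c X Y Z}.

(* A pointed category with (chosen) finite coproducts: a zero object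
   (which is also the empty coproduct) and binary coproducts. *)
Record PCCat := {
  cat :> Cat;
  zero : cat;
  to_zero : forall X : cat, Mor X zero;
  from_zero : forall X : cat, Mor zero X;
  to_zero_uniq : forall X (f g : Mor X zero), f = g;
  from_zero_uniq : forall X (f g : Mor zero X), f = g;
  cop : cat -> cat -> cat;
  inj1 : forall X Y, Mor X (cop X Y);
  inj2 : forall X Y, Mor Y (cop X Y);
  copair : forall X Y Z, Mor X Z -> Mor Y Z -> Mor (cop X Y) Z;
  copair_inj1 : forall X Y Z (f : Mor X Z) (g : Mor Y Z), comp (copair f g) (inj1 X Y) = f;
  copair_inj2 : forall X Y Z (f : Mor X Z) (g : Mor Y Z), comp (copair f g) (inj2 X Y) = g;
  copair_uniq : forall X Y Z (f : Mor X Z) (g : Mor Y Z) (h : Mor (cop X Y) Z),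
      comp h (inj1 X Y) = f -> comp h (inj2 X Y) = g -> h = copair f g }.
Arguments zero {p}. Arguments to_zero {p}. Arguments from_zero {p}.
Arguments cop {p}. Arguments inj1 {p}. Arguments inj2 {p}. Arguments copair {p X Y Z}.

Section Ops.
Variable C : PCCat.
Definition zmor (X Y : C) : Mor X Y := comp (from_zero Y) (to_zero X).
Definition r1 (X Y : C) : Mor (cop X Y) X := copair (idm X) (zmor Y X).
Definition r2 (X Y : C) : Mor (cop X Y) Y := copair (zmor X Y) (idm Y).
Definition copmap (X X' Y Y' : C) (f : Mor X X') (g : Mor Y Y') :
  Mor (cop X Y) (cop X' Y') := copair (comp (inj1 X' Y') f) (comp (inj2 X' Y') g).
Definition nabla2 (X : C) : Mor (cop X X) X := copair (idm X) (idm X).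
Definition nabla3 (X : C) : Mor (cop (cop X X) X) X := copair (nabla2 X) (idm X).
End Ops.

Record AbFunctor (C : Cat) := {
  F0 : C -> zmodType;
  F1 : forall X Y : C, Mor X Y -> {additive F0 X -> F0 Y};
  F1_id : forall X x, F1 (idm X) x = x;
  F1_comp : forall X Y Z (f : Mor X Y) (g : Mor Y Z) x, F1 (comp g f) x = F1 g (F1 f x) }.
Arguments F1 {C} a {X Y}.

Record AbBifunctor (C : Cat) := {
  B0 : C -> C -> zmodType;
  B1 : forall X X' Y Y' : C, Mor X X' -> Mor Y Y' -> {additive B0 X Y -> B0 X' Y'};
  B1_id : forall X Y x, B1 (idm X) (idm Y) x = x;
  B1_comp : forall X X' X'' Y Y' Y'' (f : Mor X X') (f' : Mor X' X'')
      (g : Mor Y Y') (g' : Mor Y' Y'') x,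
      B1 (comp f' f) (comp g' g) x = B1 f' g' (B1 f g x) }.
Arguments B1 {C} a {X X' Y Y'}.

Definition bireduced (C : PCCat) (B : AbBifunctor C) : Prop :=
  (forall (X : C) (x : B0 B X zero), x = 0) /\ (forall (Y : C) (y : B0 B zero Y), y = 0).

Definition diag (C : Cat) (B : AbBifunctor C) : AbFunctor C :=
  {| F0 := fun X => B0 B X X;
     F1 := fun X Y f => B1 B f f;
     F1_id := fun X x => @B1_id C B X X x;
     F1_comp := fun X Y Z f g x => @B1_comp C B X Y Z X Y Z f g f g x |}.

Unset Implicit Arguments.
Section CrossEffects.
Variable C : PCCat.

(* cr_2 F(X,Y) = ker(F(X v Y) -> F X (+) F Y), as a subgroup (predicate) of F(X v Y) *)
Definition cr2 (F : AbFunctor C) (X Y : C) (x : F0 F (cop X Y)) : Prop :=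
  F1 F (r1 X Y) x = 0 /\ F1 F (r2 X Y) x = 0.

(* cr_3 F(X,Y,Z) = cr_2(cr_2 F(-,Z))(X,Y), as a subgroup of F((X v Y) v Z) *)
Definition cr3 (F : AbFunctor C) (X Y Z : C) (x : F0 F (cop (cop X Y) Z)) : Prop :=
  cr2 F (cop X Y) Z x /\
  F1 F (copmap (r1 X Y) (idm Z)) x = 0 /\
  F1 F (copmap (r2 X Y) (idm Z)) x = 0.

(* the subgroup F(nabla^3)(cr_3 F(X,X,X)) of F(X), whose cokernel is T_2 F(X) *)
Definition T2ker (F : AbFunctor C) (X : C) (y : F0 F X) : Prop :=
  exists x, cr3 F X X X x /\ y = F1 F (nabla3 X) x.

Definition N1 (B : AbBifunctor C) (X Y : C) (y : B0 B X Y) : Prop :=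
  exists x : B0 B (cop X X) Y,
    (B1 B (r1 X X) (idm Y) x = 0 /\ B1 B (r2 X X) (idm Y) x = 0) /\
    y = B1 B (nabla2 X) (idm Y) x.
Definition N2 (B : AbBifunctor C) (X Y : C) (y : B0 B X Y) : Prop :=
  exists x : B0 B X (cop Y Y),
    (B1 B (idm X) (r1 Y Y) x = 0 /\ B1 B (idm X) (r2 Y Y) x = 0) /\
    y = B1 B (idm X) (nabla2 Y) x.
(* N_1 + N_2, whose cokernel is T_11 B(X,Y) *)
Definition T11ker (B : AbBifunctor C) (X Y : C) (y : B0 B X Y) : Prop :=
  exists a b, N1 B X Y a /\ N2 B X Y b /\ y = a + b.
End CrossEffects.

(* Both T_2(B Delta)(X) and T_11 B(X,X) are quotients of B(X,X), so it suffices
   that T2ker and N_1 + N_2 agree on B(X,X).  An element of N_1 is B(nabla^2,1)c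
   with c a cross effect in B(X v X, X); placing c in the summands (X v X, X) of
   B(X^3, X^3) gives an element of cr_3, and symmetrically for N_2.  Conversely,
   modulo N_1 + N_2 the map B(nabla^2, 1) becomes B(r_1, 1) + B(r_2, 1) (and
   likewise in the second variable), so expanding B(nabla^3, nabla^3) through
   nabla^3 = nabla^2 (nabla^2 v 1) turns an element of cr_3 into a sum of terms
   each killed by one of the defining conditions of cr_3. *)
From Pilot Require Import Defs.
From HB Require Import structures.
From mathcomp Require Import all_boot all_algebra.
Import GRing.Theory.
Local Open Scope ring_scope.
Local Notation comp := Defs.comp.

Section CoproductIdentities.
Variable C : PCCat.

Lemma comp_zmorl (X Y Z : C) (f : Mor Y Z) : comp f (zmor X Y) = zmor X Z.
Proof. by rewrite /zmor comp_assoc (from_zero_uniq (comp f (from_zero Y)) (from_zero Z)). Qed.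

Lemma comp_zmorr (X Y Z : C) (f : Mor X Y) : comp (zmor Y Z) f = zmor X Z.
Proof. by rewrite /zmor -comp_assoc (to_zero_uniq (comp (to_zero Y) f) (to_zero X)). Qed.

Lemma comp_copair (X Y Z W : C) (f : Mor X Z) (g : Mor Y Z) (h : Mor Z W) :
  comp h (copair f g) = copair (comp h f) (comp h g).
Proof. by apply: copair_uniq; rewrite -comp_assoc ?copair_inj1 ?copair_inj2. Qed.

Lemma copmap_inj1 (X X' Y Y' : C) (f : Mor X X') (g : Mor Y Y') :
  comp (copmap f g) (inj1 X Y) = comp (inj1 X' Y') f.
Proof. exact: copair_inj1. Qed.

Lemma copmap_inj2 (X X' Y Y' : C) (f : Mor X X') (g : Mor Y Y') :
  comp (copmap f g) (inj2 X Y) = comp (inj2 X' Y') g.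
Proof. exact: copair_inj2. Qed.

Lemma copair_copmap (X X' Y Y' Z : C) (f : Mor X X') (g : Mor Y Y')
    (h : Mor X' Z) (k : Mor Y' Z) :
  comp (copair h k) (copmap f g) = copair (comp h f) (comp k g).
Proof.
apply: copair_uniq; rewrite -comp_assoc (copmap_inj1, copmap_inj2) comp_assoc.
  by rewrite copair_inj1.
by rewrite copair_inj2.
Qed.

Lemma r1_inj1 (X Y : C) : comp (r1 X Y) (inj1 X Y) = idm X.
Proof. exact: copair_inj1. Qed.
Lemma r1_inj2 (X Y : C) : comp (r1 X Y) (inj2 X Y) = zmor Y X.
Proof. exact: copair_inj2. Qed.
Lemma r2_inj1 (X Y : C) : comp (r2 X Y) (inj1 X Y) = zmor X Y.
Proof. exact: copair_inj1. Qed.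
Lemma r2_inj2 (X Y : C) : comp (r2 X Y) (inj2 X Y) = idm Y.
Proof. exact: copair_inj2. Qed.

Lemma r1_copmap (X X' Y Y' : C) (f : Mor X X') (g : Mor Y Y') :
  comp (r1 X' Y') (copmap f g) = comp f (r1 X Y).
Proof. by rewrite copair_copmap comp_copair comp_idl comp_idr comp_zmorr comp_zmorl. Qed.

Lemma r2_copmap (X X' Y Y' : C) (f : Mor X X') (g : Mor Y Y') :
  comp (r2 X' Y') (copmap f g) = comp g (r2 X Y).
Proof. by rewrite copair_copmap comp_copair comp_idl comp_idr comp_zmorr comp_zmorl. Qed.

Lemma nabla3_factor (X : C) : nabla3 X = comp (nabla2 X) (copmap (nabla2 X) (idm X)).
Proof. by rewrite copair_copmap !comp_idl. Qed.

End CoproductIdentities.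

Section Factorization.
Variables (A P Q : zmodType) (p : {additive A -> P}) (q : {additive A -> Q}).
Hypothesis p_surj : forall y, exists a, p a = y.
Hypothesis ker_p_sub : forall a, p a = 0 -> q a = 0.

Let p_surjb y : exists a, p a == y.
Proof. by have [a <-] := p_surj y; exists a. Qed.

Definition factor (y : P) : Q := q (xchoose (p_surjb y)).

Lemma factorE a : factor (p a) = q a.
Proof.
apply/eqP; rewrite /factor -subr_eq0 -raddfB; apply/eqP/ker_p_sub.
by rewrite raddfB (eqP (xchooseP (p_surjb (p a)))) subrr.
Qed.

Lemma factor_is_zmod_morphism : GRing.zmod_morphism factor.
Proof.
move=> x y; have [a <-] := p_surj x; have [b <-] := p_surj y.
by rewrite -raddfB !factorE raddfB.
Qed.

Definition factor_additive : {additive P -> Q} :=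
  HB.pack_for {additive P -> Q} factor
    (GRing.isZmodMorphism.Build P Q factor factor_is_zmod_morphism).

End Factorization.
Arguments factor {A P Q p} q p_surj.
Arguments factorE {A P Q p q p_surj} ker_p_sub a.
Arguments factor_additive {A P Q p q}.

Lemma factor_bij {A P Q : zmodType} {p : {additive A -> P}} {q : {additive A -> Q}}
    (p_surj : forall y, exists a, p a = y) (q_surj : forall z, exists a, q a = z)
    (pq : forall a, p a = 0 -> q a = 0) (qp : forall a, q a = 0 -> p a = 0) :
  bijective (factor q p_surj).
Proof.
exists (factor p q_surj) => y.
  by have [a <-] := p_surj y; rewrite (factorE pq) (factorE qp).
by have [a <-] := q_surj y; rewrite (factorE qp) (factorE pq).
Qed.

Lemma T2kerD (C : PCCat) (F : AbFunctor C) (X : C) (x y : F0 F X) :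
  T2ker C F X x -> T2ker C F X y -> T2ker C F X (x + y).
Proof.
move=> [u [[[u1 u2] [u3 u4]] ->]] [v [[[v1 v2] [v3 v4]] ->]].
exists (u + v); rewrite /cr3 /cr2 !raddfD.
by rewrite u1 u2 u3 u4 v1 v2 v3 v4 !addr0.
Qed.

Section Bireduced.
Variables (C : PCCat) (B : AbBifunctor C).
Hypothesis HB : bireduced B.

Lemma B1_zmorl (X X' Y Y' : C) (g : Mor Y Y') x : B1 B (zmor X X') g x = 0.
Proof.
rewrite -[g]comp_idr /zmor B1_comp.
by rewrite [B1 B (to_zero X) (idm Y) x](proj2 HB) raddf0.
Qed.

Lemma B1_zmorr (X X' Y Y' : C) (f : Mor X X') x : B1 B f (zmor Y Y') x = 0.
Proof.
rewrite -[f]comp_idr /zmor B1_comp.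
by rewrite [B1 B (idm X) (to_zero Y) x](proj1 HB) raddf0.
Qed.

Lemma N1_sub_T2ker (X : C) (x : B0 B X X) : N1 C B X X x -> T2ker C (diag B) X x.
Proof.
case=> c [[c1 c2] ->]; exists (B1 B (inj1 (cop X X) X) (inj2 (cop X X) X) c).
rewrite /cr3 /cr2 /= -!B1_comp !copmap_inj1 !copmap_inj2 r1_inj1 r1_inj2 r2_inj1.
rewrite r2_inj2 B1_zmorl B1_zmorr -[inj2 X X]comp_idr !B1_comp c1 c2 !raddf0.
by rewrite -B1_comp copair_inj1 copair_inj2.
Qed.

Lemma N2_sub_T2ker (X : C) (x : B0 B X X) : N2 C B X X x -> T2ker C (diag B) X x.
Proof.
case=> c [[c1 c2] ->]; exists (B1 B (inj2 (cop X X) X) (inj1 (cop X X) X) c).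
rewrite /cr3 /cr2 /= -!B1_comp !copmap_inj1 !copmap_inj2 r1_inj1 r1_inj2 r2_inj1.
rewrite r2_inj2 B1_zmorl B1_zmorr -[inj2 X X]comp_idr !B1_comp c1 c2 !raddf0.
by rewrite -B1_comp copair_inj1 copair_inj2.
Qed.

Lemma T11ker_sub_T2ker (X : C) (x : B0 B X X) :
  T11ker C B X X x -> T2ker C (diag B) X x.
Proof. by case=> a [b [/N1_sub_T2ker ? [/N2_sub_T2ker ? ->]]]; apply: T2kerD. Qed.

Variables (T11 : C -> C -> zmodType)
  (t11 : forall X Y : C, {additive B0 B X Y -> T11 X Y})
  (t11_ker : forall X Y (x : B0 B X Y), t11 X Y x = 0 <-> T11ker C B X Y x).

(* z minus its projections to the two summands is a cross effect, so modulo N_1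
   the map B(nabla^2, 1) only sees those projections. *)
Lemma t11_nabla2l (X Y Z W : C) (p : Mor Z (cop X X)) (q : Mor W Y) (u : B0 B Z W) :
  t11 X Y (B1 B (comp (nabla2 X) p) q u) =
  t11 X Y (B1 B (comp (r1 X X) p) q u) + t11 X Y (B1 B (comp (r2 X X) p) q u).
Proof.
set z := B1 B p q u.
pose c := z - B1 B (comp (inj1 X X) (r1 X X)) (idm Y) z
            - B1 B (comp (inj2 X X) (r2 X X)) (idm Y) z.
have c_cr2 : B1 B (r1 X X) (idm Y) c = 0 /\ B1 B (r2 X X) (idm Y) c = 0.
  rewrite /c !raddfB -!B1_comp !comp_idl !comp_assoc.
  rewrite r1_inj1 r1_inj2 r2_inj1 r2_inj2 !comp_idl !comp_zmorr !B1_zmorl.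
  by rewrite !subr0 !subrr.
have /t11_ker : T11ker C B X Y (B1 B (nabla2 X) (idm Y) c).
  by exists (B1 B (nabla2 X) (idm Y) c), 0; split; [exists c | split;
    [exists 0; rewrite !raddf0 | rewrite addr0]].
rewrite /c /z !raddfB -!B1_comp !comp_idl !comp_assoc.
rewrite copair_inj1 copair_inj2 !comp_idl => /eqP.
by rewrite subr_eq0 subr_eq addrC => /eqP.
Qed.

Lemma t11_nabla2r (X Y Z W : C) (p : Mor Z X) (q : Mor W (cop Y Y)) (u : B0 B Z W) :
  t11 X Y (B1 B p (comp (nabla2 Y) q) u) =
  t11 X Y (B1 B p (comp (r1 Y Y) q) u) + t11 X Y (B1 B p (comp (r2 Y Y) q) u).
Proof.
set z := B1 B p q u.
pose c := z - B1 B (idm X) (comp (inj1 Y Y) (r1 Y Y)) z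
            - B1 B (idm X) (comp (inj2 Y Y) (r2 Y Y)) z.
have c_cr2 : B1 B (idm X) (r1 Y Y) c = 0 /\ B1 B (idm X) (r2 Y Y) c = 0.
  rewrite /c !raddfB -!B1_comp !comp_idl !comp_assoc.
  rewrite r1_inj1 r1_inj2 r2_inj1 r2_inj2 !comp_idl !comp_zmorr !B1_zmorr.
  by rewrite !subr0 !subrr.
have /t11_ker : T11ker C B X Y (B1 B (idm X) (nabla2 Y) c).
  by exists 0, (B1 B (idm X) (nabla2 Y) c); split; [exists 0; rewrite !raddf0 |
    split; [exists c | rewrite add0r]].
rewrite /c /z !raddfB -!B1_comp !comp_idl !comp_assoc.
rewrite copair_inj1 copair_inj2 !comp_idl => /eqP.
by rewrite subr_eq0 subr_eq addrC => /eqP.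
Qed.

Lemma T2ker_sub_ker_t11 (X : C) (x : B0 B X X) : T2ker C (diag B) X x -> t11 X X x = 0.
Proof.
case=> u [[[R1u R2u] [m1u m2u]] ->] /=.
have kill (Y : C) (m : Mor _ Y) (f g : Mor Y X) :
    B1 B m m u = 0 -> B1 B (comp f m) (comp g m) u = 0.
  by move=> mu; rewrite B1_comp mu raddf0.
rewrite nabla3_factor t11_nabla2l !t11_nabla2r !r1_copmap !r2_copmap !comp_idl.
rewrite kill // R2u !raddf0 add0r addr0 t11_nabla2l t11_nabla2r.
set R1 := r1 (cop X X) X; set R2 := r2 (cop X X) X.
set m1 := copmap (r1 X X) (idm X) in m1u; set m2 := copmap (r2 X X) (idm X) in m2u.
have r1R1 : comp (r1 X X) R1 = comp (r1 X X) m1 by rewrite r1_copmap.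
have r2R1 : comp (r2 X X) R1 = comp (r1 X X) m2 by rewrite r1_copmap.
have R2m1 : R2 = comp (r2 X X) m1 by rewrite r2_copmap comp_idl.
have R2m2 : R2 = comp (r2 X X) m2 by rewrite r2_copmap comp_idl.
have -> : B1 B (comp (r1 X X) R1) R2 u = 0 by rewrite r1R1 R2m1 kill.
have -> : B1 B (comp (r2 X X) R1) R2 u = 0 by rewrite r2R1 R2m2 kill.
have -> : B1 B R2 (comp (r1 X X) R1) u = 0 by rewrite r1R1 R2m1 kill.
have -> : B1 B R2 (comp (r2 X X) R1) u = 0 by rewrite r2R1 R2m2 kill.
by rewrite !raddf0 !addr0.
Qed.

End Bireduced.

Theorem proposition2p7 (C : PCCat) (B : AbBifunctor C) (HB : bireduced B)
  (T2 : C -> zmodType)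
  (t2 : forall X : C, {additive B0 B X X -> T2 X})
  (T2map : forall X Y : C, Mor X Y -> {additive T2 X -> T2 Y})
  (t2_surj : forall X (q : T2 X), exists x, t2 X x = q)
  (t2_ker : forall X (x : B0 B X X), t2 X x = 0 <-> T2ker C (diag B) X x)
  (t2_nat : forall X Y (f : Mor X Y) x, T2map X Y f (t2 X x) = t2 Y (B1 B f f x))
  (T11 : C -> C -> zmodType)
  (t11 : forall X Y : C, {additive B0 B X Y -> T11 X Y})
  (T11map : forall X X' Y Y' : C, Mor X X' -> Mor Y Y' -> {additive T11 X Y -> T11 X' Y'})
  (t11_surj : forall X Y (q : T11 X Y), exists x, t11 X Y x = q)
  (t11_ker : forall X Y (x : B0 B X Y), t11 X Y x = 0 <-> T11ker C B X Y x)
  (t11_nat : forall X X' Y Y' (f : Mor X X') (g : Mor Y Y') x,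
      T11map X X' Y Y' f g (t11 X Y x) = t11 X' Y' (B1 B f g x)) :
  exists phi : forall X : C, {additive T2 X -> T11 X X},
    (forall X (x : B0 B X X), phi X (t2 X x) = t11 X X x) /\
    (forall X, bijective (phi X)) /\
    (forall X Y (f : Mor X Y) (q : T2 X),
        phi Y (T2map X Y f q) = T11map X Y X Y f f (phi X q)).
Proof.
have ker_t2_t11 X x : t2 X x = 0 -> t11 X X x = 0.
  by move/t2_ker; apply: T2ker_sub_ker_t11.
have ker_t11_t2 X x : t11 X X x = 0 -> t2 X x = 0.
  by move/t11_ker/(@T11ker_sub_T2ker _ _ HB)/t2_ker.
exists (fun X => factor_additive (t2_surj X) (ker_t2_t11 X)); split; [|split].
- by move=> X x /=; rewrite (factorE (ker_t2_t11 X)).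
- by move=> X /=; apply: factor_bij (t11_surj X X) (ker_t2_t11 X) (ker_t11_t2 X).
- move=> X Y f q; have [x <-] := t2_surj X q.
  by rewrite /= t2_nat (factorE (ker_t2_t11 X)) (factorE (ker_t2_t11 Y)) t11_nat.
Qed.
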